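(* For every prime power $q$, every integer $n\ge -1$ and every integer $k$ with $-1\le k\le\frac{n-1}{2}$, $$f(n,q)\le q^{2k+2}f(n-k-1,q)+f(k,q)+\Bigl(\sum_{i=0}^k q^i\Bigr)\Bigl(\sum_{j=k}^{n-2}q^j\Bigr).$$
   Context: $\mathrm{PG}(n,q)$ is the $n$-dimensional projective space over $\mathbb F_q$. A $(2,1)$-blocking set in $\mathrm{PG}(n,q)$ is a set of lines such that every plane contains at least one of them. For $n\ge -1$, $f(n,q)$ is the smallest possible size of a $(2,1)$-blocking set in $\mathrm{PG}(n,q)$; in particular $f(-1,q)=f(0,q)=f(1,q)=0$. Empty sums are $0$. *)

From HB Require Import structures.
From mathcomp Require Import all_boot all_order all_algebra.
Set Implicit Arguments. Unset Strict Implicit. Unset Printing Implicit Defensive.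
Import Order.TTheory GRing.Theory Num.Theory.

(* PG(n,q) is modelled by the vector space F^(n+1) = 'rV[F]_(n+1), F a finite
   field with q elements.  A projective subspace of projective dimension d-1
   is (the set of vectors of) a d-dimensional linear subspace. *)

Section PG.
Variable F : finFieldType.

Definition is_subspace_dim (m d : nat) (S : {set 'rV[F]_m}) : bool :=
  [exists A : 'M[F]_(d, m), (\rank A == d) && (S == [set v | (v <= A)%MS])].

Definition is_line (m : nat) (S : {set 'rV[F]_m}) := is_subspace_dim 2 S.
Definition is_plane (m : nat) (S : {set 'rV[F]_m}) := is_subspace_dim 3 S.

Definition blocking21 (m : nat) (B : {set {set 'rV[F]_m}}) : bool :=
  [forall L in B, is_line L] &&
  [forall P : {set 'rV[F]_m}, is_plane P ==> [exists L in B, L \subset P]].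

(* smallest size of a (2,1)-blocking set in PG(m-1, q) (vector dimension m).
   The set of all lines is always blocking, so the default is never the
   answer unless it is attained. *)
Definition f_vec (m : nat) : nat :=
  \big[minn/#|[set: {set 'rV[F]_m}]|]_(B : {set {set 'rV[F]_m}} | blocking21 B) #|B|.

Definition fPG (n : int) : nat := f_vec (absz (n + 1)%R).

End PG.

From HB Require Import structures.
From mathcomp Require Import all_boot all_order all_algebra.
From mathcomp Require Import mxabelem zify ring.
Set Implicit Arguments. Unset Strict Implicit. Unset Printing Implicit Defensive.
Import Order.TTheory GRing.Theory Num.Theory.

(* Write F^(a+b) = K + W with K = F^a x 0, W = 0 x F^b and a = k+1 <= b = n-k, and
   fix an injective linear map Phi : F^a -> F^b.  Given optimal (2,1)-blocking sets BK
   of K and BW of W, the following lines block every plane pi, according to the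
   dimension of pi /\ K:
   - 0: pi projects isomorphically onto a plane of W, so it contains a lift of a line
     of BW; all q^(2a) lifts of all lines of BW are taken;
   - 3: pi lies in K and contains a line of BK;
   - 1 or 2: pi contains a point (p, 0) of K and a point (x, y) off K with
     p Phi y^T = 0, hence the "join line" through them.  If dim (pi /\ K) = 1, fix p:
     the (x, y) in pi with p Phi y^T = 0 form a subspace of dimension 2, so not inside K.
     If it is 2, fix (x, y) in pi off K: the p in pi /\ K with p Phi y^T = 0 form a
     nonzero subspace.
   Each join line arises from at least (q-1)^2 q parameter triples (p, x, y), related by
   lower triangular changes of basis, so there are at most [a]_q q^(a-1) [b-1]_q of them. *)

Lemma card_imset_fiber_leq (T U : finType) (f : T -> U) (A : {set T}) c :
  (forall t, t \in A -> c <= #|[set t' in A | f t' == f t]|) ->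
  #|f @: A| * c <= #|A|.
Proof.
move=> fiberA; rewrite -[X in _ <= X]sum1_card (partition_big_imset f) /= -sum_nat_const.
apply: leq_sum => _ /imsetP [t tA ->]; apply: leq_trans (fiberA t tA) _.
by rewrite -sum1_card; apply: eq_leq; apply: eq_bigl => t'; rewrite inE.
Qed.

Lemma card_set_dep (I J : finType) (P : pred I) (Q : I -> pred J) :
  #|[set u : I * J | P u.1 && Q u.1 u.2]| = \sum_(i | P i) #|[set j | Q i j]|.
Proof.
rewrite -sum1_card; under eq_bigl => u do rewrite inE.
rewrite -(pair_big_dep P Q (fun _ _ => 1%N)) /=.
by apply: eq_bigr => i _; rewrite -sum1_card; apply: eq_bigl => j; rewrite inE.
Qed.

Lemma predn_exp_factor q a c :
  (q ^ a).-1 * q ^ a * (q ^ c).-1 =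
  (\sum_(i < a) q ^ i) * q ^ a.-1 * (\sum_(j < c) q ^ j) * (q.-1 * q.-1 * q).
Proof.
rewrite !predn_exp; case: a => [|a] /=; first by rewrite big_ord0 !(muln0, mul0n).
by rewrite expnS; ring.
Qed.

Section Subspaces.
Variable F : finFieldType.

Lemma is_subspace_dimP m d (S : {set 'rV[F]_m}) :
  reflect (exists A : 'M[F]_(d, m), \rank A = d /\ S = rowg A)
          (is_subspace_dim d S).
Proof.
apply: (iffP existsP) => [[A /andP [/eqP rA /eqP SA]]|[A [rA SA]]]; exists A => //.
by rewrite rA SA !eqxx.
Qed.

Definition subspace_basis m d (S : {set 'rV[F]_m}) : 'M[F]_(d, m) :=
  odflt 0%R [pick A : 'M[F]_(d, m) | (\rank A == d) && (S == rowg A)].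

Lemma subspace_basisP m d (S : {set 'rV[F]_m}) : is_subspace_dim d S ->
  \rank (subspace_basis d S) = d /\ S = rowg (subspace_basis d S).
Proof.
move=> /existsP [A SA]; rewrite /subspace_basis.
by case: pickP => [B /andP [/eqP -> /eqP ->] //|/(_ A)]; rewrite SA.
Qed.

Lemma blocking21P m (B : {set {set 'rV[F]_m}}) :
  reflect ((forall L, L \in B -> is_line L) /\
           (forall P, is_plane P -> exists2 L, L \in B & L \subset P))
          (blocking21 B).
Proof.
apply: (iffP andP) => [[/forall_inP lineB /forallP planeB]|[lineB planeB]].
  by split=> // P /(implyP (planeB P)) /exists_inP.
split; first exact/forall_inP.
by apply/forallP => P; apply/implyP => /planeB /exists_inP.
Qed.

Lemma row_free_lblock m1 m2 n1 n2 (P : 'M[F]_(m1, n1)) (X : 'M[F]_(m2, n1))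
    (Y : 'M[F]_(m2, n2)) :
  row_free P -> row_free Y -> row_free (block_mx P 0%R X Y).
Proof.
move=> /row_freeP [P' PP'] /row_freeP [Y' YY']; apply/row_freeP.
exists (block_mx P' 0 (- (Y' *m X *m P'))%R Y').
rewrite mulmx_block !mulmx0 !mul0mx !addr0 add0r PP' YY' mulmxN !mulmxA YY'.
by rewrite mul1mx addrN -scalar_mx_block.
Qed.

Lemma mxrank_cap_kermx_col r n (S : 'M[F]_(r, n)) (c : 'cV[F]_n) :
  (\rank S).-1 <= \rank (S :&: kermx c)%MS.
Proof.
have := mxrank_sum_cap S (kermx c); rewrite mxrank_ker.
have := rank_leq_col (S + kermx c)%MS; have := rank_leq_col c.
lia.
Qed.

Lemma card_rowg_kermx_col n (c : 'cV[F]_n) : c != 0%R ->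
  #|rowg (kermx c)| = (#|F| ^ n.-1)%N.
Proof.
move=> c_neq0; rewrite card_rowg mxrank_ker.
have : \rank c = 1%N.
  by apply/eqP; rewrite eqn_leq rank_leq_col lt0n mxrank_eq0 c_neq0.
by move->; rewrite subn1.
Qed.

Lemma all_lines_blocking m : blocking21 [set L : {set 'rV[F]_m} | is_line L].
Proof.
apply/blocking21P; split => [L|_ /is_subspace_dimP [A [rA ->]]]; first by rewrite inE.
pose M : 'M[F]_(2, m) := (pid_mx 2 *m A)%R.
have rM : \rank M = 2 by rewrite mxrankMfree ?rank_pid_mx // /row_free rA.
exists (rowg M); last by rewrite rowgS submxMl.
by rewrite inE; apply/is_subspace_dimP; exists M.
Qed.

Lemma f_vec_leq m (B : {set {set 'rV[F]_m}}) : blocking21 B -> f_vec F m <= #|B|.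
Proof. by move=> blockB; rewrite /f_vec -minEnat -leEnat bigmin_le_cond. Qed.

Lemma f_vec_attained m :
  exists2 B : {set {set 'rV[F]_m}}, blocking21 B & f_vec F m = #|B|.
Proof.
have bounded (B : {set {set 'rV[F]_m}}) : blocking21 B ->
    (#|B| <= #|[set: {set 'rV[F]_m}]|)%O.
  by rewrite leEnat cardsT max_card.
rewrite /f_vec -minEnat.
by have [B blockB ->] := eq_bigmin _ _ _ (all_lines_blocking m) bounded; exists B.
Qed.

End Subspaces.

Section Construction.
Variables (F : finFieldType) (a b : nat) (Phi : 'M[F]_(a, b)).
Hypothesis Phi_free : row_free Phi.
Local Notation q := #|F|.
Local Open Scope ring_scope.

Definition Kproj : 'M[F]_(a + b, a) := col_mx 1%:M 0.
Definition Wproj : 'M[F]_(a + b, b) := col_mx 0 1%:M.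
Definition Kmx := kermx Wproj.

Lemma mul_Kproj r (M : 'M[F]_(r, a + b)) : M *m Kproj = lsubmx M.
Proof. by rewrite -[M in LHS]hsubmxK mul_row_col mulmx1 mulmx0 addr0. Qed.

Lemma mul_Wproj r (M : 'M[F]_(r, a + b)) : M *m Wproj = rsubmx M.
Proof. by rewrite -[M in LHS]hsubmxK mul_row_col mulmx1 mulmx0 add0r. Qed.

Lemma sub_Kmx r (M : 'M[F]_(r, a + b)) : (M <= Kmx)%MS = (rsubmx M == 0).
Proof. by rewrite sub_kermx mul_Wproj. Qed.

Lemma mxrank_rsubmx_cap_Kmx r (A : 'M[F]_(r, a + b)) :
  (\rank (rsubmx A) + \rank (A :&: Kmx))%N = \rank A.
Proof. by rewrite -mul_Wproj mxrank_mul_ker. Qed.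

Definition Phi_orth (p : 'rV[F]_a) (y : 'rV[F]_b) : bool := p *m Phi *m y^T == 0.

Lemma Phi_orthE p y : Phi_orth p y = (y <= kermx (p *m Phi)^T)%MS.
Proof. by rewrite sub_kermx -trmx_eq0 trmx_mul trmxK. Qed.

Lemma card_Phi_orth p : p != 0 ->
  #|[set y | (y != 0) && Phi_orth p y]| = (q ^ b.-1).-1%N.
Proof.
move=> p_neq0; have pPhi_neq0 : (p *m Phi)^T != 0.
  by rewrite trmx_eq0 -(mul0mx _ Phi); apply: contra_neq p_neq0; apply: row_free_inj.
rewrite -(card_rowg_kermx_col pPhi_neq0) [in RHS](cardsD1 0) inE sub0mx add1n /=.
by apply: eq_card => y; rewrite !inE Phi_orthE.
Qed.

Definition join_params : {set 'rV[F]_a * 'rV[F]_a * 'rV[F]_b} :=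
  [set t | (t.1.1 != 0) && ((t.2 != 0) && Phi_orth t.1.1 t.2)].

Lemma card_join_params :
  #|join_params| = ((q ^ a).-1 * q ^ a * (q ^ b.-1).-1)%N.
Proof.
rewrite (card_set_dep (fun px : 'rV_a * 'rV_a => px.1 != 0)
  (fun px y => (y != 0) && Phi_orth px.1 y)).
rewrite (eq_bigr _ (fun px => card_Phi_orth (p := px.1))) sum_nat_const.
congr (_ * _)%N; rewrite -cardsE.
have -> : [set px : 'rV[F]_a * 'rV[F]_a | px.1 != 0] = setX [set~ 0] setT.
  by apply/setP => px; rewrite !inE andbT.
by rewrite cardsX cardsC1 cardsT !card_mx !mul1n.
Qed.

Definition join_mx (t : 'rV[F]_a * 'rV[F]_a * 'rV[F]_b) : 'M[F]_(1 + 1, a + b) :=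
  block_mx t.1.1 0 t.1.2 t.2.
Definition join_line t := rowg (join_mx t).
Definition join_lines := join_line @: join_params.

Lemma row_free_join_mx t : t \in join_params -> row_free (join_mx t).
Proof.
by rewrite inE => /and3P [p_neq0 y_neq0 _]; apply: row_free_lblock;
  rewrite /row_free rank_rV ?p_neq0 ?y_neq0.
Qed.

Lemma join_line_is_line t : t \in join_params -> is_line (join_line t).
Proof.
by move=> tT; apply/is_subspace_dimP; exists (join_mx t); split=> //; apply/eqP/row_free_join_mx.
Qed.

Definition rescale_mx (w : F * F * F) : 'M[F]_(1 + 1) :=
  block_mx w.1.1%:M 0 w.2%:M w.1.2%:M.
Definition rescale_join (w : F * F * F) t : 'rV[F]_a * 'rV[F]_a * 'rV[F]_b :=
  (w.1.1 *: t.1.1, w.2 *: t.1.1 + w.1.2 *: t.1.2, w.1.2 *: t.2).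

Lemma join_mx_rescale w t : join_mx (rescale_join w t) = rescale_mx w *m join_mx t.
Proof.
by rewrite mulmx_block !mulmx0 !mul0mx !addr0 add0r !mul_scalar_mx.
Qed.

Definition rescalings : {set F * F * F} := [set w | (w.1.1 != 0) && (w.1.2 != 0)].

Lemma card_rescalings : #|rescalings| = (q.-1 * q.-1 * q)%N.
Proof.
have -> : rescalings = setX (setX [set~ 0] [set~ 0]) setT.
  by apply/setP => w; rewrite !inE andbT.
by rewrite !cardsX !cardsC1 cardsT.
Qed.

Lemma rescale_mx_unit w : w \in rescalings -> rescale_mx w \in unitmx.
Proof.
rewrite inE => /andP [k_neq0 l_neq0]; rewrite -row_free_unit.
by apply: row_free_lblock; rewrite row_free_unit unitmxE det_scalar1 unitfE.
Qed.

Lemma rescale_join_params w t :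
  w \in rescalings -> t \in join_params -> rescale_join w t \in join_params.
Proof.
rewrite !inE /Phi_orth => /andP [k_neq0 l_neq0] /and3P [p_neq0 y_neq0 /eqP pPhiy0].
rewrite !scaler_eq0 (negbTE k_neq0) (negbTE l_neq0) (negbTE p_neq0) (negbTE y_neq0) /=.
by rewrite linearZ /= -!scalemxAl -scalemxAr pPhiy0 !scaler0.
Qed.

Lemma join_line_rescale w t :
  w \in rescalings -> join_line (rescale_join w t) = join_line t.
Proof.
move=> wD; apply: eq_rowg; rewrite join_mx_rescale.
by apply: eqmxMfull; rewrite row_full_unit rescale_mx_unit.
Qed.

Lemma rescale_join_inj t : t \in join_params ->
  {in rescalings &, injective (rescale_join ^~ t)}.
Proof.
have scalar1_inj : injective (fun k : F => k%:M : 'M_1).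
  by move=> k k' /matrixP /(_ 0 0); rewrite !mxE.
move=> tT [[k l] n] [[k' l'] n'] _ _ /(congr1 join_mx); rewrite !join_mx_rescale.
move=> /(row_free_inj (row_free_join_mx tT)) /eq_block_mx /= [k_eq _ n_eq l_eq].
by rewrite (scalar1_inj _ _ k_eq) (scalar1_inj _ _ n_eq) (scalar1_inj _ _ l_eq).
Qed.

Lemma join_line_fiber t : t \in join_params ->
  (q.-1 * q.-1 * q <= #|[set t' in join_params | join_line t' == join_line t]|)%N.
Proof.
move=> tT; rewrite -card_rescalings -(card_in_imset (rescale_join_inj tT)).
apply/subset_leq_card/subsetP => _ /imsetP [w wD ->].
by rewrite inE rescale_join_params ?join_line_rescale ?eqxx.
Qed.

Lemma card_join_lines : (#|join_lines| <=
  (\sum_(i < a) q ^ i) * q ^ a.-1 * (\sum_(j < b.-1) q ^ j))%N.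
Proof.
have q_gt1 : (1 < q)%N := card_finNzRing_gt1 F.
rewrite -(@leq_pmul2r (q.-1 * q.-1 * q)); last by rewrite !muln_gt0 ltn_predRL q_gt1 ltnW.
apply: leq_trans (card_imset_fiber_leq join_line_fiber) _.
by rewrite card_join_params predn_exp_factor.
Qed.

Lemma join_line_in_plane r (A : 'M[F]_(r, a + b)) (u v : 'rV[F]_(a + b)) :
  (u <= A :&: Kmx)%MS -> u != 0 -> (v <= A)%MS -> rsubmx v != 0 ->
  Phi_orth (lsubmx u) (rsubmx v) ->
  exists2 L, L \in join_lines & L \subset rowg A.
Proof.
rewrite sub_capmx sub_Kmx => /andP [uA /eqP u_r0] u_neq0 vA v_r_neq0 orth_uv.
pose t := (lsubmx u, lsubmx v, rsubmx v).
have u_l_neq0 : lsubmx u != 0.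
  by apply: contraNneq u_neq0 => u_l0; rewrite -[u]hsubmxK u_l0 u_r0 row_mx0.
have tT : t \in join_params by rewrite inE u_l_neq0 v_r_neq0.
exists (join_line t); first exact: imset_f.
by rewrite rowgS /join_mx /block_mx /= -u_r0 !hsubmxK col_mx_sub uA.
Qed.

Lemma plane_meets_Kmx_in_point (A : 'M[F]_(3, a + b)) :
  \rank A = 3%N -> \rank (A :&: Kmx) = 1%N ->
  exists2 L, L \in join_lines & L \subset rowg A.
Proof.
move=> rA rC; have /rowV0Pn [u uC u_neq0] : (A :&: Kmx)%MS != 0.
  by rewrite -mxrank_eq0 rC.
pose c := Wproj *m (lsubmx u *m Phi)^T; pose E := (A :&: kermx c)%MS.
have rE : (2 <= \rank E)%N by apply: leq_trans (mxrank_cap_kermx_col _ _); rewrite rA.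
have /row_subPn [i Ei_notK] : ~~ (E <= Kmx)%MS.
  apply: contraL rE => EK; rewrite -ltnNge ltnS -rC.
  by apply: mxrankS; rewrite sub_capmx capmxSl.
have /andP [Ei_A Ei_ker] : (row i E <= A)%MS && (row i E <= kermx c)%MS.
  by rewrite -sub_capmx row_sub.
apply: (join_line_in_plane uC u_neq0 Ei_A); first by rewrite -sub_Kmx.
by rewrite Phi_orthE sub_kermx -mul_Wproj -mulmxA -sub_kermx.
Qed.

Lemma plane_meets_Kmx_in_line (A : 'M[F]_(3, a + b)) :
  \rank A = 3%N -> \rank (A :&: Kmx) = 2%N ->
  exists2 L, L \in join_lines & L \subset rowg A.
Proof.
move=> rA rC; have /row_subPn [i Ai_notK] : ~~ (A <= Kmx)%MS.
  apply/negP => AK; have : (\rank A <= \rank (A :&: Kmx))%N.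
    by rewrite mxrankS // sub_capmx submx_refl AK.
  by rewrite rA rC.
pose y := rsubmx (row i A).
have y_neq0 : y != 0 by rewrite -sub_Kmx.
pose E := (A :&: Kmx :&: kermx (Kproj *m Phi *m y^T))%MS.
have /rowV0Pn [u uE u_neq0] : E != 0.
  by rewrite -mxrank_eq0 -lt0n; apply: leq_trans (mxrank_cap_kermx_col _ _); rewrite rC.
move: uE; rewrite sub_capmx => /andP [uC u_ker].
apply: (join_line_in_plane uC u_neq0 (row_sub i A) y_neq0).
by move: u_ker; rewrite sub_kermx !mulmxA mul_Kproj.
Qed.

Variables (BK : {set {set 'rV[F]_a}}) (BW : {set {set 'rV[F]_b}}).
Hypotheses (BK_blocking : blocking21 BK) (BW_blocking : blocking21 BW).

Definition cone_line (lG : {set 'rV[F]_b} * 'M[F]_(2, a)) : {set 'rV[F]_(a + b)} :=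
  rowg (row_mx lG.2 (subspace_basis 2 lG.1)).
Definition cone_lines := cone_line @: setX BW setT.
Definition K_line (l : {set 'rV[F]_a}) : {set 'rV[F]_(a + b)} :=
  rowg (row_mx (subspace_basis 2 l) 0).
Definition K_lines := K_line @: BK.
Definition combined_lines := cone_lines :|: K_lines :|: join_lines.

Lemma plane_avoiding_Kmx (A : 'M[F]_(3, a + b)) :
  \rank A = 3%N -> \rank (A :&: Kmx) = 0%N ->
  exists2 L, L \in cone_lines & L \subset rowg A.
Proof.
move=> rA rC; have rW : \rank (rsubmx A) = 3%N.
  by have := mxrank_rsubmx_cap_Kmx A; rewrite rA rC addn0.
have /blocking21P [lineW planeW] := BW_blocking.
have [|l lW lA] := planeW (rowg (rsubmx A)).
  by apply/is_subspace_dimP; exists (rsubmx A).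
have [_ l_def] := subspace_basisP (lineW l lW).
pose Z := subspace_basis 2 l *m pinvmx (rsubmx A).
have ZA : Z *m rsubmx A = subspace_basis 2 l by rewrite mulmxKpV // -rowgS -l_def.
exists (cone_line (l, Z *m lsubmx A)); first by apply: imset_f; rewrite !inE lW.
by rewrite rowgS /cone_line /= -[X in row_mx _ X]ZA -mul_mx_row hsubmxK submxMl.
Qed.

Lemma plane_inside_Kmx (A : 'M[F]_(3, a + b)) :
  \rank A = 3%N -> \rank (A :&: Kmx) = 3%N ->
  exists2 L, L \in K_lines & L \subset rowg A.
Proof.
move=> rA rC; have A_r0 : rsubmx A = 0.
  apply/eqP; rewrite -mxrank_eq0.
  by have := mxrank_rsubmx_cap_Kmx A; rewrite rA rC; lia.
have rK : \rank (lsubmx A) = 3%N by rewrite -(@rank_row_mx0 _ _ _ b) -A_r0 hsubmxK.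
have /blocking21P [lineK planeK] := BK_blocking.
have [|l lK lA] := planeK (rowg (lsubmx A)).
  by apply/is_subspace_dimP; exists (lsubmx A).
have [_ l_def] := subspace_basisP (lineK l lK).
pose Z := subspace_basis 2 l *m pinvmx (lsubmx A).
have ZA : Z *m lsubmx A = subspace_basis 2 l by rewrite mulmxKpV // -rowgS -l_def.
exists (K_line l); first exact: imset_f.
by rewrite rowgS /K_line -ZA -(mulmx0 _ Z) -A_r0 -mul_mx_row hsubmxK submxMl.
Qed.

Lemma combined_lines_are_lines L : L \in combined_lines -> is_line L.
Proof.
have /blocking21P [lineK _] := BK_blocking; have /blocking21P [lineW _] := BW_blocking.
rewrite !inE => /orP [/orP [] |] /imsetP [x].
- case: x => [l G]; rewrite !inE andbT => /= /lineW /subspace_basisP [rl _] ->.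
  apply/is_subspace_dimP; exists (row_mx G (subspace_basis 2 l)); split=> //.
  apply/eqP; rewrite eqn_leq rank_leq_row /= -{1}rl.
  by rewrite -[X in \rank X](row_mxKr G) -mul_Wproj mxrankM_maxl.
- move=> /lineK /subspace_basisP [rl _] ->.
  by apply/is_subspace_dimP; exists (row_mx (subspace_basis 2 x) 0); rewrite rank_row_mx0.
- by move=> tT ->; apply: join_line_is_line.
Qed.

Lemma combined_lines_block_plane (A : 'M[F]_(3, a + b)) : \rank A = 3%N ->
  exists2 L, L \in combined_lines & L \subset rowg A.
Proof.
move=> rA; have := mxrankS (capmxSl A Kmx); rewrite rA.
case rC: (\rank _) => [|[|[|[|//]]]] _.
- by have [L LW LA] := plane_avoiding_Kmx rA rC; exists L; rewrite // !inE LW.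
- by have [L LT LA] := plane_meets_Kmx_in_point rA rC; exists L; rewrite // !inE LT orbT.
- by have [L LT LA] := plane_meets_Kmx_in_line rA rC; exists L; rewrite // !inE LT orbT.
- by have [L LK LA] := plane_inside_Kmx rA rC; exists L; rewrite // !inE LK orbT.
Qed.

Lemma combined_lines_blocking : blocking21 combined_lines.
Proof.
apply/blocking21P; split; first exact: combined_lines_are_lines.
by move=> _ /is_subspace_dimP [A [rA ->]]; apply: combined_lines_block_plane.
Qed.

Lemma card_combined_lines :
  (#|combined_lines| <= #|BW| * q ^ (2 * a) + #|BK| + #|join_lines|)%N.
Proof.
apply: leq_trans (leq_card_setU _ _) _; rewrite leq_add2r.
apply: leq_trans (leq_card_setU _ _) _; apply: leq_add; last exact: leq_imset_card.
by apply: leq_trans (leq_imset_card _ _) _; rewrite cardsX cardsT card_mx.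
Qed.

End Construction.

Lemma f_vec_add_leq (F : finFieldType) a b : a <= b ->
  f_vec F (a + b) <= #|F| ^ (2 * a) * f_vec F b + f_vec F a
    + (\sum_(i < a) #|F| ^ i) * #|F| ^ a.-1 * (\sum_(j < b.-1) #|F| ^ j).
Proof.
move=> le_ab; have Phi_free : row_free (pid_mx a : 'M[F]_(a, b)).
  by rewrite /row_free rank_pid_mx.
have [BK BK_blocking ->] := f_vec_attained F a.
have [BW BW_blocking ->] := f_vec_attained F b.
apply: leq_trans (f_vec_leq (combined_lines_blocking Phi_free BK_blocking BW_blocking)) _.
apply: leq_trans (card_combined_lines _ _ _) _; rewrite mulnC leq_add2l.
exact: card_join_lines.
Qed.

Local Open Scope ring_scope.

Lemma mul_sum_expz_shift (R : unitRingType) (x : R) (k : int) c : -1 <= k ->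
  (\sum_(i < `|k + 1|) x ^+ i) * (\sum_(t < c) x ^ (k + t%:Z)) =
  (\sum_(i < `|k + 1|) x ^+ i) * x ^+ `|k + 1|.-1 * (\sum_(t < c) x ^+ t).
Proof.
case: k => [k|[|//]] _; last by rewrite big_ord0 !mul0r.
rewrite -PoszD addn1 /= -mulrA [in RHS]big_distrr /=; congr (_ * _); apply: eq_bigr => t _.
by rewrite -PoszD -exprnP exprD.
Qed.

Theorem proposition3p32 (F : finFieldType) (n k : int) :
  -1 <= n -> -1 <= k -> 2 * k <= n - 1 ->
  let q : rat := (#|F|%:R)%R in
  ((fPG F n)%:R : rat) <=
    q ^ (2 * k + 2) * (fPG F (n - k - 1))%:R + (fPG F k)%:R
    + (\sum_(i < absz (k + 1)%R) q ^+ i)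
      * (\sum_(t < absz (Num.max 0 (n - 1 - k))%R) q ^ (k + t%:Z)).
Proof.
move=> n_ge k_ge k_le /=; rewrite mul_sum_expz_shift //.
set a := absz (k + 1); set b := absz (n - k).
have le_ab : (a <= b)%N by lia.
have -> : fPG F n = f_vec F (a + b) by rewrite /fPG; congr f_vec; lia.
have -> : fPG F (n - k - 1) = f_vec F b by rewrite /fPG; congr f_vec; lia.
have -> : fPG F k = f_vec F a by rewrite /fPG; congr f_vec; lia.
have -> : 2 * k + 2 = (2 * a)%N :> int by lia.
have -> : absz (Num.max 0 (n - 1 - k)) = b.-1 by lia.
have sum_natr c : \sum_(i < c) (#|F|%:R : rat) ^+ i = (\sum_(i < c) #|F| ^ i)%:R.
  by rewrite natr_sum; apply: eq_bigr => i _; rewrite natrX.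
by rewrite -exprnP !sum_natr -!natrX -!natrM -!natrD ler_nat f_vec_add_leq.
Qed.
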